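(* Let $R$ be a ring and $M$ a subinjective extension-reflecting right $R$-module. Then $M\in \underline{\mathfrak{In}}^{-1}(S)$ for every simple right $R$-module $S$ if and only if $M\in \underline{\mathfrak{In}}^{-1}(A)$ for every right $R$-module $A$ of finite composition length.
   Context: Modules are unital right $R$-modules. For modules $X,Y$, $X\in \underline{\mathfrak{In}}^{-1}(Y)$ means: for every module $C$ containing $X$ as a submodule, every homomorphism $X\to Y$ extends to a homomorphism $C\to Y$. A module $M$ is subinjective extension-reflecting if for every short exact sequence $0\to A\to B\to C\to 0$ of right $R$-modules, $M\in \underline{\mathfrak{In}}^{-1}(A)\cap \underline{\mathfrak{In}}^{-1}(C)$ implies $M\in \underline{\mathfrak{In}}^{-1}(B)$. *)

From HB Require Import structures.
From mathcomp Require Import all_boot all_order all_algebra.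
Set Implicit Arguments. Unset Strict Implicit. Unset Printing Implicit Defensive.
Import GRing.Theory.
Local Open Scope ring_scope.

(* Right R-modules are left modules over the converse ring R^c. *)
Notation rmodType R := (lmodType (R^c)).

Section Defs.
Variable R : pzRingType.

(* X \in In^{-1}(Y): for every module C containing X as a submodule
   (i.e. every injective homomorphism i : X -> C), every homomorphism
   f : X -> Y extends along i to a homomorphism C -> Y. *)
Definition In_inv (X Y : rmodType R) : Prop :=
  forall (C : rmodType R) (i : {linear X -> C}), injective i ->
  forall f : {linear X -> Y},
  exists g : {linear C -> Y}, forall x, g (i x) = f x.

Definition short_exact (A B C : rmodType R)
  (f : {linear A -> B}) (g : {linear B -> C}) : Prop :=
  injective f /\ (forall c, exists b, g b = c) /\
  (forall b, g b = 0 <-> exists a, f a = b).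

Definition subinj_ext_reflecting (M : rmodType R) : Prop :=
  forall (A B C : rmodType R) (f : {linear A -> B}) (g : {linear B -> C}),
  short_exact f g -> In_inv M A -> In_inv M C -> In_inv M B.

Definition is_submod (A : rmodType R) (S : A -> Prop) : Prop :=
  S 0 /\ forall (a : R^c) (x y : A), S x -> S y -> S (a *: x + y).

Definition simple_mod (S : rmodType R) : Prop :=
  (exists x : S, x != 0) /\
  forall T : S -> Prop, is_submod T ->
    (forall x, T x -> x = 0) \/ (forall x, T x).

(* A has finite composition length: there is a composition series
   0 = S_0 < S_1 < ... < S_n = A with each factor S_{i+1}/S_i simple,
   i.e. S_i is a proper submodule of S_{i+1} and no submodule lies
   strictly between them. *)
Definition finite_length (A : rmodType R) : Prop :=
  exists (n : nat) (S : nat -> A -> Prop),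
    (forall i, is_submod (S i)) /\
    (forall x, S 0%N x <-> x = 0) /\
    (forall x, S n x) /\
    (forall i, (i < n)%N ->
       (forall x, S i x -> S i.+1 x) /\
       (exists x, S i.+1 x /\ ~ S i x) /\
       (forall T : A -> Prop, is_submod T ->
          (forall x, S i x -> T x) -> (forall x, T x -> S i.+1 x) ->
          (forall x, T x -> S i x) \/ (forall x, S i.+1 x -> T x))).
End Defs.

From HB Require Import structures.
From mathcomp Require Import all_boot all_order all_algebra.
From mathcomp Require Import boolp.
Set Implicit Arguments. Unset Strict Implicit. Unset Printing Implicit Defensive.
Import GRing.Theory.
Local Open Scope ring_scope.
Local Open Scope quotient_scope.

(* Induct along a composition series 0 = S_0 < S_1 < ... < S_n = A.  The
   sequence 0 -> S_i -> S_(i+1) -> S_(i+1)/S_i -> 0 has a simple cokernel, so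
   extension-reflection carries M from In^-1(S_i) to In^-1(S_(i+1)); the zero
   module S_0 is trivial, and 0 -> S_n -> A -> 0 -> 0 reaches A.  Conversely a
   simple module has composition length 1. *)

Definition maximal_in (R : pzRingType) (V : rmodType R) (N1 N2 : V -> Prop) : Prop :=
  forall T : V -> Prop, is_submod T ->
    (forall x, N1 x -> T x) -> (forall x, T x -> N2 x) ->
    (forall x, T x -> N1 x) \/ (forall x, N2 x -> T x).

Section LinearImages.
Variables (R : pzRingType) (U W : rmodType R) (f : {linear U -> W}).

Lemma is_submod_preim (T : W -> Prop) : is_submod T -> is_submod (fun u => T (f u)).
Proof.
case=> T0 TP; split=> [|a x y Tx Ty]; first by rewrite linear0.
by rewrite linearP; apply: TP.
Qed.

Lemma is_submod_image (T : U -> Prop) :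
  is_submod T -> is_submod (fun w => exists u, f u = w /\ T u).
Proof.
case=> T0 TP; split=> [|a _ _ [x [<- Tx]] [y [<- Ty]]].
  by exists 0; rewrite linear0.
by exists (a *: x + y); rewrite linearP; split=> //; apply: TP.
Qed.
End LinearImages.

Section Submodules.
Variables (R : pzRingType) (V : rmodType R).

Record submodule := Submodule { submod_mem : V -> Prop; submodP : is_submod submod_mem }.

Definition submod_pred (S : submodule) : pred V := fun x => `[< submod_mem S x >].

Lemma submod_predP S x : reflect (submod_mem S x) (x \in submod_pred S).
Proof. exact: asboolP. Qed.

Lemma submod_pred_closed S : subsemimod_closed (submod_pred S).
Proof.
apply: GRing.submod_closed_semi; case: (submodP S) => S0 SP; split.
  exact/submod_predP.
by move=> a x y /submod_predP Sx /submod_predP Sy; apply/submod_predP/SP.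
Qed.

HB.instance Definition _ S :=
  GRing.isSubmodClosed.Build _ _ (submod_pred S) (submod_pred_closed S).

Section SubAndQuotient.
Variable S : submodule.

Record sub_of := SubOf { sub_val : V; sub_valP : sub_val \in submod_pred S }.
HB.instance Definition _ := [isSub for sub_val].
HB.instance Definition _ := [Choice of sub_of by <:].
HB.instance Definition _ := [SubChoice_isSubLmodule of sub_of by <:].

Definition sub_of_mem x (Sx : submod_mem S x) : sub_of := SubOf (introT (submod_predP S x) Sx).

Lemma submod_mem_val (u : sub_of) : submod_mem S (val u).
Proof. exact/submod_predP/valP. Qed.

Lemma sub_of_image v : submod_mem S v <-> exists u : sub_of, val u = v.
Proof. by split=> [Sv | [u <-]]; [exists (sub_of_mem Sv) | apply: submod_mem_val]. Qed.

(* [{ideal_quot I}] quotients a Z-module by any additively closed [I], not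
   only by an ideal; only the scalar action has to be added. *)
Definition submod_zmod : zmodClosed V := GRing.ZmodClosed.clone V (submod_pred S) _.
Definition quot_of := {ideal_quot submod_zmod}.
HB.instance Definition _ : EqQuotient V (Quotient.equiv submod_zmod) quot_of :=
  EqQuotient.on quot_of.
HB.instance Definition _ := Choice.on quot_of.
HB.instance Definition _ := GRing.Zmodule.on quot_of.
HB.instance Definition _ := ZmodQuotient.on quot_of.

Lemma pi_eq0 x : (\pi_quot_of x == 0) = (x \in submod_pred S).
Proof. by rewrite -[x in RHS]subr0 Quotient.idealrBE pi_zeror. Qed.

Definition quot_scale (a : R^c) := lift_op1 quot_of ( *:%R a).

Lemma pi_scale a : {morph \pi_quot_of : x / a *: x >-> quot_scale a x}.
Proof.
move=> x; unlock quot_scale; apply/eqP; rewrite piE Quotient.equivE.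
by rewrite -scalerBr rpredZ // Quotient.idealrBE reprK.
Qed.
Canonical pi_scale_morph a := PiMorph1 (pi_scale a).

Lemma quot_scaleA a b x : quot_scale a (quot_scale b x) = quot_scale (a * b) x.
Proof. by rewrite -[x]reprK !piE scalerA. Qed.

Lemma quot_scale1 : left_id 1 quot_scale.
Proof. by move=> x; rewrite -[x]reprK !piE scale1r. Qed.

Lemma quot_scaleDr : right_distributive quot_scale +%R.
Proof. by move=> a x y; rewrite -[x]reprK -[y]reprK !piE scalerDr. Qed.

Lemma quot_scaleDl x : {morph quot_scale^~ x : a b / a + b}.
Proof. by move=> a b; rewrite -[x]reprK !piE scalerDl. Qed.

HB.instance Definition _ := GRing.Zmodule_isLmodule.Build (R^c) quot_of
  quot_scaleA quot_scale1 quot_scaleDr quot_scaleDl.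
HB.instance Definition _ := GRing.isScalable.Build (R^c) V quot_of *:%R
  \pi_quot_of pi_scale.

Lemma sub_of_trivial : (forall x, submod_mem S x -> x = 0) -> forall u : sub_of, u = 0.
Proof. by move=> S0 u; apply: val_inj; rewrite linear0; apply/S0/submod_mem_val. Qed.

Lemma quot_of_trivial : (forall x, submod_mem S x) -> forall q : quot_of, q = 0.
Proof. by move=> ST; elim/quotW => x; apply/eqP; rewrite pi_eq0; apply/submod_predP. Qed.

Lemma quot_short_exact (U : rmodType R) (f : {linear U -> V}) :
  injective f -> (forall v, submod_mem S v <-> exists u, f u = v) ->
  short_exact f (\pi_quot_of : {linear V -> quot_of}).
Proof.
move=> f_inj imf; split=> //; split=> [q | v]; first by exists (repr q); exact: reprK.
rewrite -imf (rwP eqP) pi_eq0; exact: iff_sym (rwP (submod_predP _ _)).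
Qed.

Lemma quot_simple :
  (exists x, ~ submod_mem S x) -> maximal_in (submod_mem S) (fun _ => True) ->
  simple_mod quot_of.
Proof.
move=> [x nSx] Smax; split=> [|T Tsub].
  by exists (\pi x); rewrite pi_eq0; apply/submod_predP.
have Tpre_sub := is_submod_preim (\pi_quot_of : {linear V -> quot_of}) Tsub.
have S_Tpre v : submod_mem S v -> T (\pi_quot_of v).
  move=> Sv; have /eqP -> : \pi_quot_of v == 0 by rewrite pi_eq0; apply/submod_predP.
  exact: (proj1 Tsub).
have [Tpre_S | Tpre_all] := Smax _ Tpre_sub S_Tpre (fun _ _ => I); [left | right].
  by elim/quotW => v /Tpre_S Sv; apply/eqP; rewrite pi_eq0; apply/submod_predP.
by elim/quotW => v; apply: Tpre_all.
Qed.
End SubAndQuotient.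
End Submodules.

Section Inclusion.
Variables (R : pzRingType) (V : rmodType R) (S1 S2 : submodule V).

Definition sub_preim : submodule (sub_of S2) :=
  Submodule (is_submod_preim (val : {linear sub_of S2 -> V}) (submodP S1)).

Variable sub12 : forall x, submod_mem S1 x -> submod_mem S2 x.

Definition sub_incl (u : sub_of S1) : sub_of S2 := sub_of_mem (sub12 (submod_mem_val u)).

Lemma sub_incl_is_linear : linear sub_incl.
Proof. by move=> a u v; apply: val_inj. Qed.
HB.instance Definition _ := GRing.isLinear.Build (R^c) (sub_of S1) (sub_of S2) _
  sub_incl sub_incl_is_linear.

Lemma sub_incl_inj : injective sub_incl.
Proof. by move=> u v /(congr1 val) eq_uv; apply: val_inj. Qed.

Lemma sub_incl_image y : submod_mem sub_preim y <-> exists u, sub_incl u = y.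
Proof.
split=> [S1y | [u <-]]; last exact: submod_mem_val.
by exists (sub_of_mem (S := S1) S1y); apply: val_inj.
Qed.

Lemma sub_preim_maximal :
  maximal_in (submod_mem S1) (submod_mem S2) ->
  maximal_in (submod_mem sub_preim) (fun _ => True).
Proof.
move=> S1max T Tsub S1_T _.
pose Timg x := exists y : sub_of S2, val y = x /\ T y.
have Timg_sub : is_submod Timg := is_submod_image (val : {linear sub_of S2 -> V}) Tsub.
have S1_Timg x : submod_mem S1 x -> Timg x.
  by move=> S1x; exists (sub_of_mem (sub12 S1x)); split=> //; apply: S1_T.
have Timg_S2 x : Timg x -> submod_mem S2 x by case=> y [<- _]; apply: submod_mem_val.
have [Timg_S1 | S2_Timg] := S1max _ Timg_sub S1_Timg Timg_S2; [left | right] => y.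
  by move=> Ty; apply: Timg_S1; exists y.
by have [y' [/val_inj -> //]] := S2_Timg _ (submod_mem_val y).
Qed.
End Inclusion.

Section InjectivityClass.
Variables (R : pzRingType) (M : rmodType R).

Lemma In_inv_trivial (Y : rmodType R) : (forall y : Y, y = 0) -> In_inv M Y.
Proof. by move=> Y0 C i _ f; exists \0 => x; rewrite (Y0 (f x)). Qed.

Hypothesis M_reflecting : subinj_ext_reflecting M.

Lemma In_inv_extension (U V : rmodType R) (S : submodule V) (f : {linear U -> V}) :
  injective f -> (forall v, submod_mem S v <-> exists u, f u = v) ->
  In_inv M U -> In_inv M (quot_of S) -> In_inv M V.
Proof. by move=> f_inj imf; apply: M_reflecting (quot_short_exact f_inj imf). Qed.

Hypothesis M_simple : forall S : rmodType R, simple_mod S -> In_inv M S.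

Lemma In_inv_composition_step (V : rmodType R) (S1 S2 : submodule V)
    (sub12 : forall x, submod_mem S1 x -> submod_mem S2 x) :
  (exists x, submod_mem S2 x /\ ~ submod_mem S1 x) ->
  maximal_in (submod_mem S1) (submod_mem S2) ->
  In_inv M (sub_of S1) -> In_inv M (sub_of S2).
Proof.
move=> [x [S2x nS1x]] S1max In1.
apply: (In_inv_extension _ (sub_incl_image sub12)) In1 _; first exact: sub_incl_inj.
apply/M_simple/quot_simple; last exact: sub_preim_maximal.
by exists (sub_of_mem S2x).
Qed.
End InjectivityClass.

Lemma simple_finite_length (R : pzRingType) (S : rmodType R) : simple_mod S -> finite_length S.
Proof.
case=> [[x0 x0_neq0] Smin].
exists 1%N, (fun i x => if i is 0%N then x = 0 else True); split.
  by case=> [|i]; split=> //= a x y -> ->; rewrite scaler0 addr0.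
do 2!split=> //; case=> // _; split=> //; split; first by exists x0; split=> //; apply/eqP.
by move=> T Tsub _ _; case: (Smin T Tsub) => T0; [left | right] => x // /T0.
Qed.

Theorem mainTheorem4 (R : pzRingType) (M : rmodType R) :
  subinj_ext_reflecting M ->
  ((forall S : rmodType R, simple_mod S -> In_inv M S) <->
   (forall A : rmodType R, finite_length A -> In_inv M A)).
Proof.
move=> hM; split=> [M_simple A [n [S [Ssub [S0 [Sn Sstep]]]]] | M_fl S /simple_finite_length];
  last exact: M_fl.
pose SS i := Submodule (Ssub i).
have In_series i : (i <= n)%N -> In_inv M (sub_of (SS i)).
  elim: i => [_ | i IH lt_in]; first by apply/In_inv_trivial/sub_of_trivial => x /S0.
  have [sub [proper max]] := Sstep i lt_in.
  exact: (In_inv_composition_step hM M_simple (S1 := SS i) (S2 := SS i.+1) sub proper max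
            (IH (ltnW lt_in))).
apply: (In_inv_extension hM val_inj (sub_of_image (SS n))) (In_series n (leqnn n)) _.
exact: In_inv_trivial (quot_of_trivial (S := SS n) Sn).
Qed.
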